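(* Let $m,n$ be positive integers and let $A=(A(i_1,\dots,i_{2m}))_{1\le i_1,\dots,i_{2m}\le n}$ be any array. Define the array $B=(B(i_1,\dots,i_{2m}))_{1\le i_1,\dots,i_{2m}\le 2n}$ as follows: if for every $1\le s\le m$ exactly one of $i_{2s-1},i_{2s}$ is odd, write the odd one as $2p_s-1$ and the even one as $2q_s$ ($1\le p_s,q_s\le n$) and set $B(i_1,\dots,i_{2m})=(-1)^{k}A(p_1,q_1,\dots,p_m,q_m)$, where $k$ is the number of $s$ with $i_{2s-1}$ even; otherwise set $B(i_1,\dots,i_{2m})=0$. Then $B$ satisfies the alternation condition below and $\mathrm{Pf}^{[2m]}(B)=\mathrm{Det}^{[2m]}(A)$.
   Context: Hyperdeterminant: for an array $A$ indexed by $\{1,\dots,n\}^{2m}$, $\mathrm{Det}^{[2m]}(A):=\frac{1}{n!}\sum_{\sigma_1,\dots,\sigma_{2m}\in\mathfrak{S}_n}\mathrm{sgn}(\sigma_1)\cdots\mathrm{sgn}(\sigma_{2m})\prod_{i=1}^nA(\sigma_1(i),\dots,\sigma_{2m}(i)).$ Alternation condition: an array $B$ indexed by $\{1,\dots,2n\}^{2m}$ satisfies it if, for each $1\le s\le m$, interchanging the arguments $i_{2s-1}$ and $i_{2s}$ multiplies $B(i_1,\dots,i_{2m})$ by $-1$. Hyperpfaffian of such $B$: with $\mathfrak{E}_{2n}=\{\sigma\in\mathfrak{S}_{2n}:\sigma(2i-1)<\sigma(2i),\ 1\le i\le n\}$, $$\mathrm{Pf}^{[2m]}(B):=\frac{1}{n!}\sum_{\sigma_1,\dots,\sigma_m\in\mathfrak{E}_{2n}}\mathrm{sgn}(\sigma_1)\cdots\mathrm{sgn}(\sigma_m)\prod_{i=1}^nB(\sigma_1(2i-1),\sigma_1(2i),\dots,\sigma_m(2i-1),\sigma_m(2i)).$$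 *)

(* Indices are 0-based: 'I_n stands for {1,...,n}. *)
From HB Require Import structures.
From mathcomp Require Import all_boot all_order all_algebra all_fingroup.
From mathcomp Require Import zify.
Set Implicit Arguments. Unset Strict Implicit. Unset Printing Implicit Defensive.
Import GRing.Theory.
Local Open Scope ring_scope.

(* pair position: pos s b = 2s + b in 'I_(2k); corresponds (1-based) to
   2(s+1)-1 if b = false and 2(s+1) if b = true *)
Lemma pos_lt (k : nat) (s : 'I_k) (b : bool) : (2 * s + b < 2 * k)%N.
Proof. have := ltn_ord s; case: b => /=; lia. Qed.
Definition pos (k : nat) (s : 'I_k) (b : bool) : 'I_(2 * k) := Ordinal (pos_lt s b).

Lemma half_lt (k : nat) (t : 'I_(2 * k)) : (t %/ 2 < k)%N.
Proof. have := ltn_ord t; rewrite ltn_divLR //; lia. Qed.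
Definition half (k : nat) (t : 'I_(2 * k)) : 'I_k := Ordinal (half_lt t).

Definition sgnp (R : pzRingType) (k : nat) (s : 'S_k) : R := (-1) ^+ odd_perm s.

Definition array (R : Type) (m N : nat) := {ffun 'I_(2 * m) -> 'I_N} -> R.

Definition hDet (R : fieldType) (m n : nat) (A : array R m n) : R :=
  (n`!%:R)^-1 *
  \sum_(sig : {ffun 'I_(2 * m) -> 'S_n})
     (\prod_(t : 'I_(2 * m)) sgnp R (sig t)) *
     \prod_(i : 'I_n) A [ffun t => sig t i].

Definition inE2 (n : nat) (s : 'S_(2 * n)) : bool :=
  [forall i : 'I_n, (s (pos i false) < s (pos i true))%N].

Definition hPf (R : fieldType) (m n : nat) (B : array R m (2 * n)) : R :=
  (n`!%:R)^-1 *
  \sum_(sig : {ffun 'I_m -> 'S_(2 * n)} | [forall s, inE2 (sig s)])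
     (\prod_(s : 'I_m) sgnp R (sig s)) *
     \prod_(i : 'I_n) B [ffun t => sig (half t) (pos i (odd t))].

Definition alternating (R : pzRingType) (m N : nat) (B : array R m N) : Prop :=
  forall (s : 'I_m) (i : {ffun 'I_(2 * m) -> 'I_N}),
    B [ffun t => i (tperm (pos s false) (pos s true) t)] = - B i.

Definition BofA (R : pzRingType) (m n : nat) (A : array R m n) : array R m (2 * n) :=
  fun i =>
    if [forall s : 'I_m, odd (i (pos s false)) != odd (i (pos s true))] then
      (-1) ^+ #|[set s : 'I_m | odd (i (pos s false))]| *
      A [ffun t => let a := i (pos (half t) false) in
                   let b := i (pos (half t) true) in
                   if odd a == odd t then half a else half b]
    else 0.

(* Only the terms of Pf(B) in which every pair of every permutation mixes an
   odd and an even index survive, since B vanishes elsewhere.  A permutation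
   of E_2n with this property is the interleaving of two permutations a, b of
   {1..n}: it sends the pair i to {2a(i)-1, 2b(i)} in increasing order, and
   its sign is sgn a * sgn b * (-1)^#{i | b(i) < a(i)}.  That last factor is
   exactly the sign built into B, so the two factors cancel and the Pfaffian
   sum over m such permutations becomes the determinant sum over the 2m
   permutations a_1, b_1, ..., a_m, b_m. *)

From Pilot Require Import Defs.
From HB Require Import structures.
From mathcomp Require Import all_boot all_order all_algebra all_fingroup zify.
(* Re-import so that [half] and [pos] refer to Defs, not to ssrnat's [half]. *)
Import Defs.
Import GRing.Theory.
Local Open Scope ring_scope.
Set Implicit Arguments. Unset Strict Implicit. Unset Printing Implicit Defensive.

Lemma tperm_inj (T T' : finType) (f : T -> T') : injective f ->
  forall x y z, tperm (f x) (f y) (f z) = f (tperm x y z).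
Proof.
move=> f_inj x y z; case: (tpermP x y z) => [-> | -> | /eqP zx /eqP zy].
- by rewrite tpermL.
- by rewrite tpermR.
by rewrite tpermD // (inj_eq f_inj) eq_sym.
Qed.

Section Positions.
Variable k : nat.
Implicit Types (s : 'I_k) (t : 'I_(2 * k)).

Lemma half_pos s b : half (pos s b) = s.
Proof. by apply: val_inj => /=; case: b => /=; lia. Qed.

Lemma odd_pos s b : odd (pos s b) = b.
Proof. by rewrite /= oddD oddM; case: b. Qed.

Lemma posK t : pos (half t) (odd t) = t.
Proof.
by apply: val_inj => /=; rewrite divn2 -[in RHS](odd_double_half t) -muln2; lia.
Qed.

Lemma eq_pos s s' b b' : (pos s b == pos s' b') = (s == s') && (b == b').
Proof.
apply/idP/idP => [/eqP E | /andP[/eqP-> /eqP->] //].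
have := congr1 (@half k) E; have := congr1 (fun t : 'I_(2 * k) => odd t) E.
by rewrite /= !half_pos !odd_pos => -> ->; rewrite !eqxx.
Qed.

Lemma pos_inj b : injective (fun s : 'I_k => pos s b).
Proof. by move=> s s' /eqP; rewrite eq_pos eqxx andbT => /eqP. Qed.

Lemma tperm_pos s s' b :
  tperm (pos s false) (pos s true) (pos s' b) =
  if s' == s then pos s (~~ b) else pos s' b.
Proof.
have [-> | ne] := eqVneq s' s; first by case: b; rewrite ?tpermL ?tpermR.
by rewrite tpermD // eq_pos eq_sym (negbTE ne).
Qed.

End Positions.

Lemma alternating_BofA (R : pzRingType) m n (A : array R m n) :
  alternating (BofA A).
Proof.
move=> s i; set j := [ffun t => _].
have jE s' b : j (pos s' b) = if s' == s then i (pos s (~~ b)) else i (pos s' b).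
  by rewrite ffunE tperm_pos; case: eqP.
rewrite /BofA.
have -> : [forall s', odd (j (pos s' false)) != odd (j (pos s' true))] =
          [forall s', odd (i (pos s' false)) != odd (i (pos s' true))].
  apply: eq_forallb => s'; rewrite !jE.
  by case: (eqVneq s' s) => [-> | _] //=; rewrite eq_sym.
case: forallP => [/(_ s) mixed_s | _]; last by rewrite oppr0.
have same_A : A [ffun t => let a := j (pos (half t) false) in
                           let b := j (pos (half t) true) in
                           if odd a == odd t then half a else half b] =
              A [ffun t => let a := i (pos (half t) false) in
                           let b := i (pos (half t) true) in
                           if odd a == odd t then half a else half b].
  congr (A _); apply/ffunP => t; rewrite !ffunE /= !tperm_pos.
  case: (eqVneq (half t) s) => [-> | _] //=.
  by move: mixed_s; do 2![case: (odd (i _))]; case: (odd t).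
have same_rest : [set s' | odd (j (pos s' false))] :\ s =
                 [set s' | odd (i (pos s' false))] :\ s.
  by apply/setP => s'; rewrite !inE jE; case: eqP.
rewrite same_A (cardsD1 s [set _ | _]) [in RHS](cardsD1 s [set _ | _]) same_rest.
rewrite !inE jE eqxx !exprD -!mulrA -mulNr; congr (_ * _).
by move: mixed_s; do 2![case: (odd (i _))] => //= _; rewrite expr0 expr1 ?opprK.
Qed.

Section Interleave.
Variable n : nat.
Implicit Types (a b : 'S_n) (i : 'I_n) (c : bool).

Definition lift_parity_fun c a (t : 'I_(2 * n)) : 'I_(2 * n) :=
  if odd t == c then pos (a (half t)) c else t.

Lemma lift_parity_funK c a : cancel (lift_parity_fun c a) (lift_parity_fun c a^-1).
Proof.
move=> t; rewrite /lift_parity_fun; have [E | ne] := eqVneq (odd t) c.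
  by rewrite odd_pos half_pos eqxx permK -E posK.
by rewrite (negbTE ne).
Qed.

Definition lift_parity c a : 'S_(2 * n) := perm (can_inj (lift_parity_funK c a)).

Lemma lift_parityE c a i c' :
  lift_parity c a (pos i c') = if c' == c then pos (a i) c else pos i c'.
Proof. by rewrite permE /lift_parity_fun odd_pos half_pos. Qed.

Lemma lift_parityM c : {morph lift_parity c : a b / (a * b)%g}.
Proof.
move=> a b; apply/permP => t; rewrite -[t]posK; move: (half t) (odd t) => i c'.
rewrite permM !lift_parityE.
by case: (eqVneq c' c) => [_ | ne]; rewrite lift_parityE ?eqxx ?permM // (negbTE ne).
Qed.

Lemma lift_parity1 c : lift_parity c 1%g = 1%g.
Proof.
apply/permP => t; rewrite -[t]posK; move: (half t) (odd t) => i c'.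
by rewrite lift_parityE !perm1; case: eqP => [-> |].
Qed.

Lemma lift_parity_tperm c i j :
  lift_parity c (tperm i j) = tperm (pos i c) (pos j c).
Proof.
apply/permP => t; rewrite -[t]posK; move: (half t) (odd t) => k c'.
rewrite lift_parityE; have [-> | ne] := eqVneq c' c.
  by rewrite (tperm_inj (@pos_inj n c)).
by rewrite tpermD // eq_pos [c == _]eq_sym (negbTE ne) andbF.
Qed.

Lemma odd_lift_parity c a : odd_perm (lift_parity c a) = odd_perm a.
Proof.
have [ts -> dp] := prod_tpermP a.
rewrite (big_morph (lift_parity c) (lift_parityM c) (lift_parity1 c)).
under eq_bigr do rewrite lift_parity_tperm.
rewrite -(big_map (fun p => (pos p.1 c, pos p.2 c)) xpredT (fun p => tperm p.1 p.2)).
rewrite !odd_perm_prod ?size_map // all_map.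
by apply: sub_all dp => p; rewrite /= /dpair eq_pos eqxx andbT.
Qed.

Definition swap_pairs_fun (S : {set 'I_n}) (t : 'I_(2 * n)) : 'I_(2 * n) :=
  if half t \in S then pos (half t) (~~ odd t) else t.

Lemma swap_pairs_funK S : involutive (swap_pairs_fun S).
Proof.
move=> t; rewrite /swap_pairs_fun; have [St | St] := boolP (half t \in S).
  by rewrite half_pos St odd_pos negbK posK.
by rewrite /= (negbTE St).
Qed.

Definition swap_pairs S : 'S_(2 * n) := perm (inv_inj (swap_pairs_funK S)).

Lemma swap_pairsE S i c :
  swap_pairs S (pos i c) = if i \in S then pos i (~~ c) else pos i c.
Proof. by rewrite permE /swap_pairs_fun half_pos odd_pos. Qed.

Lemma odd_swap_pairs S : odd_perm (swap_pairs S) = odd #|S|.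
Proof.
have [k cardS] : exists k, #|S| = k by exists #|S|.
rewrite cardS; elim: k S cardS => [|k IHk] S cardS.
  have -> : swap_pairs S = 1%g.
    apply/permP => t; rewrite -[t]posK swap_pairsE perm1.
    by rewrite (_ : S = set0) ?inE //; apply/eqP; rewrite -cards_eq0 cardS.
  by rewrite odd_perm1.
have [i Si] : exists i, i \in S by apply/set0Pn; rewrite -card_gt0 cardS.
have cardSi : #|S :\ i| = k by move: cardS; rewrite (cardsD1 i) Si add1n => -[].
have -> : swap_pairs S = (tperm (pos i false) (pos i true) * swap_pairs (S :\ i))%g.
  apply/permP => t; rewrite permM -[t]posK; move: (half t) (odd t) => j c.
  rewrite tperm_pos !swap_pairsE.
  by case: (eqVneq j i) => [-> | ne]; rewrite ?Si swap_pairsE !inE ?eqxx ?ne.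
by rewrite odd_mul_tperm eq_pos eqxx /= (IHk _ cardSi).
Qed.

(* The pair [i] is sent to the positions [pos (a i) false] and [pos (b i) true],
   in increasing order. *)
Definition interleave a b : 'S_(2 * n) :=
  (swap_pairs [set i | b i < a i]%N * (lift_parity false a * lift_parity true b))%g.

Lemma interleaveE a b i c :
  interleave a b (pos i c) =
  if (b i < a i)%N (+) c then pos (b i) true else pos (a i) false.
Proof.
rewrite /interleave !permM swap_pairsE inE.
have -> : (if (b i < a i)%N then pos i (~~ c) else pos i c) =
          pos i ((b i < a i)%N (+) c).
  by case: (b i < a i)%N.
by case: addb; rewrite !lift_parityE.
Qed.

Lemma odd_interleave a b :
  odd_perm (interleave a b) =
  odd #|[set i | b i < a i]%N| (+) odd_perm a (+) odd_perm b.
Proof. by rewrite !odd_permM odd_swap_pairs !odd_lift_parity addbA. Qed.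

Lemma interleave_pos_lt a b i :
  (interleave a b (pos i false) < interleave a b (pos i true))%N.
Proof. by rewrite !interleaveE; case: (ltnP (b i) (a i)) => /=; lia. Qed.

Lemma odd_interleave_pos a b i c :
  odd (interleave a b (pos i c)) = (b i < a i)%N (+) c.
Proof. by rewrite interleaveE; case: addb; rewrite odd_pos. Qed.

Lemma half_interleave_pos a b i c :
  half (interleave a b (pos i c)) = if (b i < a i)%N (+) c then b i else a i.
Proof. by rewrite interleaveE; case: addb; rewrite half_pos. Qed.

Definition mixed_parity (s : 'S_(2 * n)) : bool :=
  [forall i, odd (s (pos i false)) != odd (s (pos i true))].

Definition pair_half (s : 'S_(2 * n)) c i : 'I_n :=
  half (if odd (s (pos i false)) == c then s (pos i false) else s (pos i true)).

Lemma pair_half_interleave a b c i :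
  pair_half (interleave a b) c i = if c then b i else a i.
Proof.
rewrite /pair_half !odd_interleave_pos.
by case lt_ba: (b i < a i)%N; case: c; rewrite /= half_interleave_pos lt_ba.
Qed.

Lemma pair_half_inj s c : mixed_parity s -> injective (pair_half s c).
Proof.
move=> /forallP mixed.
have pair_halfP i : exists e, pos (pair_half s c i) c = s (pos i e).
  rewrite /pair_half; have [<- | ne] := eqVneq (odd (s (pos i false))) c.
    by exists false; rewrite posK.
  exists true; rewrite -[RHS]posK; congr pos.
  by move: (mixed i) ne; do 2![case: (odd (s _))]; case: c.
move=> i j eq_ij; have [e1 Ei] := pair_halfP i; have [e2 Ej] := pair_halfP j.
by move: Ei; rewrite eq_ij Ej => /perm_inj /eqP; rewrite eq_pos => /andP[/eqP].
Qed.

Lemma interleaveP s :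
  reflect (exists a b, s = interleave a b) (inE2 s && mixed_parity s).
Proof.
apply: (iffP andP) => [[/forallP lt_s mixed] | [a [b ->]]]; last first.
  split; apply/forallP => i; first exact: interleave_pos_lt.
  by rewrite !odd_interleave_pos; case: (_ < _)%N.
exists (perm (pair_half_inj (c := false) mixed)).
exists (perm (pair_half_inj (c := true) mixed)).
apply/permP => u; rewrite -[u]posK; move: (half u) (odd u) => i c.
rewrite interleaveE !permE /pair_half.
move/forallP/(_ i): mixed (lt_s i).
set u0 := s (pos i false); set u1 := s (pos i true).
have val_u0 : nat_of_ord u0 = (2 * half u0 + odd u0)%N by rewrite -[in LHS](posK u0).
have val_u1 : nat_of_ord u1 = (2 * half u1 + odd u1)%N by rewrite -[in LHS](posK u1).
move: (posK u0) (posK u1) val_u0 val_u1.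
case: (odd u0); case: (odd u1) => //= posK0 posK1 val_u0 val_u1 _ lt01.
  have -> : (half u0 < half u1)%N by move: val_u0 val_u1 lt01 => /=; lia.
  by case: c.
have -> : (half u1 < half u0)%N = false by move: val_u0 val_u1 lt01 => /=; lia.
by case: c.
Qed.

End Interleave.

Lemma sgnp_interleave (R : comPzRingType) n (a b : 'S_n) :
  sgnp R (interleave a b) * (-1) ^+ #|[set i | b i < a i]%N| = sgnp R a * sgnp R b.
Proof.
rewrite /sgnp odd_interleave; move: (odd_perm a) (odd_perm b) #|_| => x y k.
rewrite !signr_addb signr_odd mulrC !mulrA -exprD.
by rewrite -[(-1) ^+ (k + k)]signr_odd oddD addbb mul1r.
Qed.

Lemma signr_card (R : pzRingType) (I : finType) (P : pred I) :
  (-1) ^+ #|[set i | P i]| = \prod_i (if P i then -1 else 1) :> R.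
Proof. by rewrite -big_mkcond prodr_const cardsE. Qed.

Lemma prod_pos_pairs (R : comPzRingType) m (F : 'I_(2 * m) -> R) :
  \prod_t F t = \prod_(s < m) (F (pos s false) * F (pos s true)).
Proof.
rewrite (reindex (fun p : 'I_m * bool => pos p.1 p.2)) /=; last first.
  exists (fun t => (half t, odd t)) => [[s b] _ | t _]; last exact: posK.
  by rewrite half_pos odd_pos.
rewrite -(pair_bigA _ (fun s b => F (pos s b))) /=.
by apply: eq_bigr => s _; rewrite big_bool mulrC.
Qed.

Section PfaffianSum.
Variables (R : comPzRingType) (m n : nat) (A : array R m n).

Definition pair_interleave (y : {ffun 'I_(2 * m) -> 'S_n}) :
  {ffun 'I_m -> 'S_(2 * n)} :=
  [ffun s => interleave (y (pos s false)) (y (pos s true))].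

Lemma pair_interleave_inj : injective pair_interleave.
Proof.
move=> y y' /ffunP eq_yy'; apply/ffunP => t; rewrite -[t]posK.
move: (half t) (odd t) => s c; apply/permP => i.
have := congr1 (fun p => pair_half p c i) (eq_yy' s).
by rewrite !ffunE !pair_half_interleave; case: c.
Qed.

Lemma mem_pair_interleave (x : {ffun 'I_m -> 'S_(2 * n)}) :
  [forall s, inE2 (x s)] && [forall s, mixed_parity (x s)] =
  (x \in [set pair_interleave y | y in setT]).
Proof.
apply/andP/imsetP => [[/forallP lt_x /forallP mixed_x] | [y _ ->]].
  have /fin_all_exists[ab x_ab] s : exists ab, x s = interleave ab.1 ab.2.
    by have /interleaveP[a [b ->]] : inE2 (x s) && mixed_parity (x s);
      [rewrite lt_x mixed_x | exists (a, b)].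
  exists [ffun t : 'I_(2 * m) =>
            if odd t then (ab (half t)).2 else (ab (half t)).1] => //.
  by apply/ffunP => s; rewrite !ffunE !half_pos !odd_pos x_ab.
have interleaved s : inE2 (pair_interleave y s) && mixed_parity (pair_interleave y s).
  by apply/interleaveP; rewrite ffunE; eauto.
by split; apply/forallP => s; case/andP: (interleaved s).
Qed.

Lemma prod_BofA_unmixed (x : {ffun 'I_m -> 'S_(2 * n)}) :
  ~~ [forall s, mixed_parity (x s)] ->
  \prod_(i < n) BofA A [ffun t => x (half t) (pos i (odd t))] = 0.
Proof.
case/forallPn => s /forallPn[i]; rewrite negbK => unmixed.
rewrite (bigD1 i) //= {1}/BofA ifN ?mul0r //; apply/forallPn; exists s.
by rewrite !ffunE !half_pos !odd_pos negbK.
Qed.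

Lemma BofA_pair_interleave y i :
  BofA A [ffun t => pair_interleave y (half t) (pos i (odd t))] =
  (-1) ^+ #|[set s | y (pos s true) i < y (pos s false) i]%N| * A [ffun t => y t i].
Proof.
rewrite /BofA ifT; last first.
  apply/forallP => s; rewrite !ffunE !half_pos !odd_pos !odd_interleave_pos.
  by case: (_ < _)%N.
congr (_ ^+ _ * A _).
  apply: eq_card => s.
  by rewrite !inE ffunE half_pos odd_pos ffunE odd_interleave_pos addbF.
apply/ffunP => t; rewrite !ffunE !half_pos !odd_pos.
rewrite !odd_interleave_pos !half_interleave_pos -[in RHS](posK t).
by case: (odd t); case: (_ < _)%N.
Qed.

Lemma pf_term_pair_interleave y :
  (\prod_s sgnp R (pair_interleave y s)) *
    \prod_(i < n) BofA A [ffun t => pair_interleave y (half t) (pos i (odd t))] =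
  (\prod_t sgnp R (y t)) * \prod_(i < n) A [ffun t => y t i].
Proof.
under [X in _ * X]eq_bigr do rewrite BofA_pair_interleave.
rewrite big_split /= mulrA; congr (_ * _).
under [X in _ * X]eq_bigr do rewrite signr_card.
rewrite exchange_big /= (prod_pos_pairs (fun t => sgnp R (y t))) -big_split.
by apply: eq_bigr => s _; rewrite -signr_card ffunE; apply: sgnp_interleave.
Qed.

Lemma pf_sum_BofA :
  \sum_(x : {ffun 'I_m -> 'S_(2 * n)} | [forall s, inE2 (x s)])
     (\prod_s sgnp R (x s)) *
     \prod_(i < n) BofA A [ffun t => x (half t) (pos i (odd t))] =
  \sum_(y : {ffun 'I_(2 * m) -> 'S_n})
     (\prod_t sgnp R (y t)) * \prod_(i < n) A [ffun t => y t i].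
Proof.
pose mixed (x : {ffun 'I_m -> 'S_(2 * n)}) := [forall s, mixed_parity (x s)].
rewrite (bigID mixed) /=.
rewrite [X in _ + X]big1 ?addr0 => [|x /andP[_ /prod_BofA_unmixed ->]]; last first.
  by rewrite mulr0.
rewrite (eq_bigl _ _ mem_pair_interleave) big_imset /=; last first.
  by move=> y y' _ _; apply: pair_interleave_inj.
by apply: eq_big => [y | y _]; rewrite ?in_setT ?pf_term_pair_interleave.
Qed.

End PfaffianSum.

Theorem proposition2p2 (R : fieldType) (hR : [pchar R] =i pred0)
  (m n : nat) (hm : (0 < m)%N) (hn : (0 < n)%N) (A : array R m n) :
  alternating (BofA A) /\ hPf (BofA A) = hDet A.
Proof.
split; first exact: alternating_BofA.
by rewrite /hPf /hDet pf_sum_BofA.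
Qed.
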